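(* The connected twin-free bipartite graphs of order $2k$ for which $i_{\max}(G)=k+1$ are in one-to-one correspondence with $k\times k$ binary matrices satisfying the following conditions: there is an all-$1$ row and an all-$1$ column; all columns are distinct, and all rows are distinct; the union (bitwise maximum) of any two rows is a row of the matrix itself.
   Context: $i_{\max}(G)$ denotes the number of maximal independent sets of $G$. A graph is twin-free if no two vertices have the same open neighbourhood. The correspondence is via the reduced (bipartite) adjacency matrix. *)

From mathcomp Require Import all_boot all_algebra.
Set Implicit Arguments. Unset Strict Implicit. Unset Printing Implicit Defensive.

Definition simple_graph (T : finType) (e : rel T) : Prop :=
  symmetric e /\ irreflexive e.

Definition independent (T : finType) (e : rel T) (S : {set T}) : bool :=
  [forall x in S, forall y in S, ~~ e x y].

Definition imax (T : finType) (e : rel T) : nat :=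
  #|[set S : {set T} | maxset (independent e) S]|.

Definition connected_graph (T : finType) (e : rel T) : Prop :=
  forall x y : T, connect e x y.

Definition twin_free (T : finType) (e : rel T) : Prop :=
  forall x y : T, [set z | e x z] = [set z | e y z] -> x = y.

Definition bipartite (T : finType) (e : rel T) : Prop :=
  exists c : T -> bool, forall x y, e x y -> c x != c y.

(* The bipartite graph with reduced adjacency matrix M: vertices inl i (rows)
   and inr j (columns), inl i ~ inr j iff M i j. *)
Definition bip_rel (k : nat) (M : 'M[bool]_k) : rel ('I_k + 'I_k) :=
  fun u v => match u, v with
             | inl i, inr j => M i j
             | inr j, inl i => M i j
             | _, _ => false
             end.

Definition good_matrix (k : nat) (M : 'M[bool]_k) : Prop :=
  [/\ (exists i, forall j, M i j),
      (exists j, forall i, M i j),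
      (forall j1 j2, (forall i, M i j1 = M i j2) -> j1 = j2),
      (forall i1 i2, (forall j, M i1 j = M i2 j) -> i1 = i2)
    & (forall i1 i2, exists i3, forall j, M i3 j = M i1 j || M i2 j)].

From mathcomp Require Import all_boot all_algebra.
From mathcomp Require Import zify.
Set Implicit Arguments. Unset Strict Implicit. Unset Printing Implicit Defensive.

(* For a bipartite graph with sides A and B, a maximal independent set S is
   determined by Z = N(S ∩ A): its part in B is B \ Z and its part in A is
   A \ N(B \ Z); conversely every N(X) with X ⊆ A arises in this way.  Hence
   i_max(G) counts the distinct neighbourhoods N(X), X ⊆ A.  In a twin-free
   graph without isolated vertices, ∅ and the N(a), a ∈ A, are |A| + 1 distinct
   such sets, so i_max(G) ≥ max(|A|, |B|) + 1 ≥ k + 1 when |A| + |B| = 2k.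
   Equality forces |A| = |B| = k and makes every N(X) with X ≠ ∅ a single
   neighbourhood N(a): the rows of the reduced adjacency matrix are closed under
   union, and N(A) = B, N(B) = A give a full row and a full column.  Conversely,
   union-closed rows leave only ∅ and the k rows as neighbourhoods. *)

Section Neighbourhoods.

Variables (T : finType) (e : rel T).

Definition nbh (X : {set T}) : {set T} := \bigcup_(x in X) [set y | e x y].

Lemma nbhP (X : {set T}) y : reflect (exists2 x, x \in X & e x y) (y \in nbh X).
Proof.
by apply: (iffP bigcupP) => -[x xX]; rewrite ?inE => exy; exists x; rewrite ?inE.
Qed.

Lemma nbhS (X Y : {set T}) : X \subset Y -> nbh X \subset nbh Y.
Proof.
move=> /subsetP sXY; apply/subsetP => y /nbhP [x xX exy].
by apply/nbhP; exists x; first exact: sXY.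
Qed.

Lemma nbhU (X Y : {set T}) : nbh (X :|: Y) = nbh X :|: nbh Y.
Proof. exact: bigcup_setU. Qed.

Lemma nbh1 a : nbh [set a] = [set y | e a y].
Proof. exact: big_set1. Qed.

Hypotheses (e_sym : symmetric e) (e_irr : irreflexive e).

Lemma maxset_independentP S : reflect (S = ~: nbh S) (maxset (independent e) S).
Proof.
have indepP (X : {set T}) : reflect {in X &, forall x y, ~~ e x y} (independent e X).
  apply: (iffP forall_inP) => [iX x y xX | iX x xX]; last by apply/forall_inP => y; apply: iX.
  exact: (forall_inP (iX x xX)).
have outside_nbh (X : {set T}) v : v \in X -> independent e X -> v \notin nbh X.
  by move=> vX /indepP iX; apply/nbhP => -[x xX]; apply/negP; exact: iX.
apply: (iffP maxsetP) => [[iS maxS] | defS].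
  apply/setP => v; rewrite inE; apply/idP/idP => [vS | vN]; first exact: outside_nbh.
  rewrite -(maxS (v |: S)) ?setU11 ?subsetUr //; apply/indepP.
  have nbh_v x : x \in S -> ~~ e x v.
    by move=> xS; apply: contra vN => exv; apply/nbhP; exists x.
  move=> x y /setU1P[-> | xS] /setU1P[-> | yS]; rewrite ?e_irr ?nbh_v //.
    by rewrite e_sym nbh_v.
  exact: (indepP _ iS).
have iS : independent e S.
  apply/indepP => x y xS yS; apply: contraL yS => exy.
  by rewrite defS inE negbK; apply/nbhP; exists x.
split=> // S' iS' sSS'; apply/eqP; rewrite eqEsubset sSS' andbT; apply/subsetP => v vS'.
rewrite defS inE; apply/negP => /nbhP [s sS esv].
by have := indepP _ iS' s v (subsetP sSS' s sS) vS'; rewrite esv.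
Qed.

End Neighbourhoods.

Definition bipartition (T : finType) (e : rel T) (A : {set T}) : Prop :=
  forall x y, e x y -> (x \in A) != (y \in A).

Lemma bipartitionC (T : finType) (e : rel T) (A : {set T}) :
  bipartition e A -> bipartition e (~: A).
Proof. by move=> eA x y /eA; rewrite !inE; case: (x \in A); case: (y \in A). Qed.

Section Bipartition.

Variables (T : finType) (e : rel T) (A : {set T}).
Hypotheses (e_sym : symmetric e) (eA : bipartition e A).

Let e_irr : irreflexive e.
Proof. by move=> x; apply/negP => /eA; rewrite eqxx. Qed.

Lemma nbh_setD_side (S : {set T}) v :
  v \in A -> (v \in nbh e S) = (v \in nbh e (S :\: A)).
Proof.
move=> vA; apply/nbhP/nbhP => -[x xS exv]; exists x => //; rewrite inE in xS *.
  by rewrite xS andbT; move: (eA exv); rewrite vA; case: (x \in A).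
by case/andP: xS.
Qed.

Lemma nbh_setI_side (S : {set T}) v :
  v \notin A -> (v \in nbh e S) = (v \in nbh e (S :&: A)).
Proof.
move=> vA; apply/nbhP/nbhP => -[x xS exv]; exists x => //; rewrite inE in xS *.
  by rewrite xS /=; move: (eA exv); rewrite (negbTE vA); case: (x \in A).
by case/andP: xS.
Qed.

(* The maximal independent set [S] with [nbh e (S :&: A) = Z], if any. *)
Definition mis_of_nbh (Z : {set T}) : {set T} :=
  (A :\: nbh e (~: A :\: Z)) :|: (~: A :\: Z).

Lemma mis_of_nbhK (S : {set T}) :
  maxset (independent e) S -> mis_of_nbh (nbh e (S :&: A)) = S.
Proof.
move/(maxset_independentP e_sym e_irr) => defS.
have inS v : (v \in S) = (v \notin nbh e S) by rewrite {1}defS inE.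
rewrite /mis_of_nbh.
have -> : ~: A :\: nbh e (S :&: A) = S :\: A.
  apply/setP => v; rewrite !inE inS; case: (boolP (v \in A)) => vA /=; first by rewrite !andbF.
  by rewrite !andbT -nbh_setI_side.
have -> : A :\: nbh e (S :\: A) = S :&: A.
  apply/setP => v; rewrite !inE inS; case: (boolP (v \in A)) => vA /=; last by rewrite !andbF.
  by rewrite !andbT -nbh_setD_side.
by rewrite setID.
Qed.

Lemma nbh_closure (X : {set T}) :
  X \subset A -> nbh e (A :\: nbh e (~: A :\: nbh e X)) = nbh e X.
Proof.
move=> sXA; set Y := ~: A :\: nbh e X; apply/eqP; rewrite eqEsubset; apply/andP; split.
  apply/subsetP => z /nbhP [x]; rewrite inE => /andP [xY xA] exz.
  apply: contraR xY => zX; apply/nbhP; exists z; last by rewrite e_sym.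
  by rewrite !inE zX; move: (eA exz); rewrite xA; case: (z \in A).
apply/nbhS/subsetP => x xX; rewrite inE (subsetP sXA) // andbT.
apply/nbhP => -[y]; rewrite inE => /andP [/negP yX _] eyx.
by apply: yX; apply/nbhP; exists x; rewrite // e_sym.
Qed.

Lemma maxset_mis_of_nbh (X : {set T}) : X \subset A ->
  maxset (independent e) (mis_of_nbh (nbh e X)) /\
  nbh e (mis_of_nbh (nbh e X) :&: A) = nbh e X.
Proof.
move=> sXA; set Y := ~: A :\: nbh e X.
have sYA : Y \subset ~: A by apply: subsetDl.
have misA : mis_of_nbh (nbh e X) :&: A = A :\: nbh e Y.
  by apply/setP => v; rewrite !inE; case: (v \in A); rewrite /= ?andbT ?andbF ?orbF.
have misB : mis_of_nbh (nbh e X) :\: A = Y.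
  by apply/setP => v; rewrite !inE; case: (v \in A); rewrite /= ?andbT ?andbF ?orbF.
split; last by rewrite misA nbh_closure.
apply/(maxset_independentP e_sym e_irr)/setP => v; rewrite inE.
case: (boolP (v \in A)) => vA; rewrite !inE.
  by rewrite (nbh_setD_side (mis_of_nbh _)) // misB vA !andbF orbF andbT.
rewrite (nbh_setI_side (mis_of_nbh _)) // misA nbh_closure //.
by rewrite (negbTE vA) andbF /= andbT.
Qed.

Definition nbh_family : {set {set T}} := [set nbh e X | X in powerset A].

Lemma imax_bipartition : imax e = #|nbh_family|.
Proof.
rewrite /imax -(card_in_imset (f := fun S => nbh e (S :&: A))); last first.
  by apply: (can_in_inj (g := mis_of_nbh)) => S; rewrite inE => /mis_of_nbhK.
apply: eq_card => Z; apply/imsetP/imsetP => -[S].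
  by rewrite inE => _ ->; exists (S :&: A); rewrite ?powersetE ?subsetIr.
rewrite powersetE => /maxset_mis_of_nbh [mis nbh_mis] ->.
by exists (mis_of_nbh (nbh e S)); rewrite ?inE.
Qed.

Definition point_nbhs : {set {set T}} := set0 |: [set [set y | e a y] | a in A].

Lemma point_nbhs_sub : point_nbhs \subset nbh_family.
Proof.
apply/subsetP => Z /setU1P [-> | /imsetP [a aA ->]]; apply/imsetP.
  by exists set0; rewrite ?powersetE ?sub0set // /nbh big_set0.
by exists [set a]; rewrite ?powersetE ?sub1set ?nbh1.
Qed.

Lemma nbh_family_point :
    {in A &, forall a1 a2, exists2 a3, a3 \in A &
       [set y | e a1 y] :|: [set y | e a2 y] = [set y | e a3 y]} ->
  nbh_family = point_nbhs.
Proof.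
move=> unionA; apply/eqP; rewrite eqEsubset point_nbhs_sub andbT.
apply/subsetP => Z /imsetP [X]; rewrite powersetE => sXA ->{Z}.
apply: (big_ind (fun Z => Z \in point_nbhs)) => [|Z1 Z2|x xX]; first exact: setU11.
  move=> /setU1P [-> | /imsetP [a1 a1A ->]]; first by rewrite set0U.
  move=> /setU1P [-> | /imsetP [a2 a2A ->]]; first by rewrite setU0 setU1r ?imset_f.
  by have [a3 a3A ->] := unionA _ _ a1A a2A; rewrite setU1r ?imset_f.
by rewrite setU1r ?imset_f ?(subsetP sXA).
Qed.

Hypothesis no_isolated : forall x, exists y, e x y.

Lemma nbh_point : nbh_family = point_nbhs ->
  forall X : {set T}, X \subset A -> X != set0 ->
  exists2 a, a \in A & nbh e X = [set y | e a y].
Proof.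
move=> famE X sXA /set0Pn [x xX].
have : nbh e X \in point_nbhs by rewrite -famE imset_f ?powersetE.
case/setU1P => [nbhX0 | /imsetP [a aA ->]]; last by exists a.
have [y exy] := no_isolated x.
have : y \in nbh e X by apply/nbhP; exists x.
by rewrite nbhX0 inE.
Qed.

Lemma nbh_side : nbh e A = ~: A.
Proof.
apply/setP => v; rewrite inE; apply/nbhP/idP => [[a aA /eA] | vB].
  by rewrite aA; case: (v \in A).
have [y evy] := no_isolated v; exists y; last by rewrite e_sym.
by move: (eA evy); rewrite (negbTE vB); case: (y \in A).
Qed.

Lemma point_nbh_side : nbh_family = point_nbhs -> A != set0 ->
  exists2 a, a \in A & [set y | e a y] = ~: A.
Proof.
move=> famE nA0; have [a aA nbhA] := nbh_point famE (subxx A) nA0.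
by exists a; rewrite -?nbhA ?nbh_side.
Qed.

Hypothesis e_twin_free : twin_free e.

Lemma card_point_nbhs : #|point_nbhs| = #|A|.+1.
Proof.
rewrite cardsU1 card_in_imset => [|a1 a2 _ _]; last exact: e_twin_free.
case: imsetP => // -[a _ nbh_a0]; have [y eay] := no_isolated a.
by have := in_set0 y; rewrite nbh_a0 inE eay.
Qed.

Lemma imax_ge_bipartition : #|A|.+1 <= imax e.
Proof. by rewrite imax_bipartition -card_point_nbhs subset_leq_card ?point_nbhs_sub. Qed.

Lemma nbh_family_point_of_imax : imax e = #|A|.+1 -> nbh_family = point_nbhs.
Proof.
move=> imaxE; apply/esym/eqP.
by rewrite eqEcard point_nbhs_sub card_point_nbhs -imaxE imax_bipartition /=.
Qed.

End Bipartition.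

Lemma card_bipartition_imax (T : finType) (e : rel T) (A : {set T}) k :
  symmetric e -> bipartition e A -> twin_free e -> (forall x, exists y, e x y) ->
  #|T| = (2 * k)%N -> imax e = k.+1 -> #|A| = k.
Proof.
move=> e_sym eA e_tf no_iso cardT imaxE.
have := imax_ge_bipartition e_sym eA no_iso e_tf.
have := imax_ge_bipartition e_sym (bipartitionC eA) no_iso e_tf.
by have := cardsC A; rewrite imaxE cardT; lia.
Qed.

Lemma connected_no_isolated (T : finType) (e : rel T) :
  connected_graph e -> 1 < #|T| -> forall x, exists y, e x y.
Proof.
move=> conn cardT x; have /card_gt0P [y] : 0 < #|[set~ x]| by rewrite cardsC1; lia.
rewrite !inE => yx; have /connectP [[|z p] /= xp ylast] := conn x y.
  by rewrite ylast eqxx in yx.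
by case/andP: xp => exz _; exists z.
Qed.

Lemma exists_bipartition_bij (T : finType) (A : {set T}) k :
  #|A| = k -> #|~: A| = k ->
  exists g : 'I_k + 'I_k -> T,
    [/\ bijective g, forall i, g (inl i) \in A & forall j, g (inr j) \notin A].
Proof.
move=> cardA cardB.
pose gA (i : 'I_k) : T := enum_val (cast_ord (esym cardA) i).
pose gB (j : 'I_k) : T := enum_val (cast_ord (esym cardB) j).
have gA_in i : gA i \in A by apply: enum_valP.
have gB_out j : gB j \notin A by have := enum_valP (cast_ord (esym cardB) j); rewrite inE.
exists (fun u => match u with inl i => gA i | inr j => gB j end); split => //.
apply: inj_card_bij; last by rewrite card_sum !card_ord -(cardsC A) cardA cardB.
case=> [i|j] [i'|j'] /=.
- by move/enum_val_inj/cast_ord_inj ->.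
- by move=> gij; have := gB_out j'; rewrite -gij gA_in.
- by move=> gij; have := gB_out j; rewrite gij gA_in.
- by move/enum_val_inj/cast_ord_inj ->.
Qed.

Section ReducedGraph.

Variables (k : nat) (M : 'M[bool]_k).

Definition row_vertices : {set 'I_k + 'I_k} :=
  [set u | if u is inl _ then true else false].

Lemma card_row_vertices : #|row_vertices| = k.
Proof.
have -> : row_vertices = inl @: [set: 'I_k].
  by apply/setP => -[i|j]; rewrite !inE ?imset_f //; apply/esym/imsetP => -[].
by rewrite card_imset ?cardsT ?card_ord // => i1 i2 [].
Qed.

Lemma bip_rel_sym : symmetric (bip_rel M).
Proof. by case=> ? [] ?. Qed.

Lemma bipartition_bip_rel : bipartition (bip_rel M) row_vertices.
Proof. by case=> ? [] ? //=; rewrite !inE. Qed.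

Lemma row_union_closed :
    (forall i1 i2, exists i3, forall j, M i3 j = M i1 j || M i2 j) ->
  {in row_vertices &, forall u1 u2, exists2 u3, u3 \in row_vertices &
     [set v | bip_rel M u1 v] :|: [set v | bip_rel M u2 v] = [set v | bip_rel M u3 v]}.
Proof.
move=> unionM [i1|j1] [i2|j2]; rewrite !inE //= => _ _.
have [i3 rowE] := unionM i1 i2.
by exists (inl i3); rewrite ?inE //; apply/setP => -[i|j]; rewrite !inE /= ?rowE.
Qed.

Lemma bip_rel_rows_inj : twin_free (bip_rel M) ->
  forall i1 i2, (forall j, M i1 j = M i2 j) -> i1 = i2.
Proof.
move=> tf i1 i2 rowE; suff [] : inl i1 = inl i2 :> 'I_k + 'I_k by [].
by apply: tf; apply/setP => -[i|j]; rewrite !inE /= ?rowE.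
Qed.

Lemma bip_rel_cols_inj : twin_free (bip_rel M) ->
  forall j1 j2, (forall i, M i j1 = M i j2) -> j1 = j2.
Proof.
move=> tf j1 j2 colE; suff [] : inr j1 = inr j2 :> 'I_k + 'I_k by [].
by apply: tf; apply/setP => -[i|j]; rewrite !inE /= ?colE.
Qed.

Hypotheses (full_row : exists i, forall j, M i j) (full_col : exists j, forall i, M i j).

Lemma bip_rel_no_isolated u : exists v, bip_rel M u v.
Proof.
have [[i0 Hi0] [j0 Hj0]] := (full_row, full_col).
by case: u => [i|j]; [exists (inr j0); apply: Hj0 | exists (inl i0); apply: Hi0].
Qed.

Lemma connected_bip_rel : connected_graph (bip_rel M).
Proof.
have [[i0 Hi0] [j0 Hj0]] := (full_row, full_col).
have to_i0 u : connect (bip_rel M) u (inl i0).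
  case: u => [i|j]; last exact/connect1/Hi0.
  by apply: (connect_trans (y := inr j0)); apply: connect1; [apply: Hj0 | apply: Hj0].
move=> u v; apply: connect_trans (to_i0 u) _.
by rewrite (sym_connect_sym bip_rel_sym) to_i0.
Qed.

Lemma twin_free_bip_rel :
    (forall i1 i2, (forall j, M i1 j = M i2 j) -> i1 = i2) ->
    (forall j1 j2, (forall i, M i j1 = M i j2) -> j1 = j2) ->
  twin_free (bip_rel M).
Proof.
move=> rows_inj cols_inj u v /setP nbhE; have [j0 Hj0] := full_col.
have {}nbhE w : bip_rel M u w = bip_rel M v w by have := nbhE w; rewrite !inE.
case: u v nbhE => [i1|j1] [i2|j2] nbhE.
- by rewrite (rows_inj i1 i2) // => j; apply: (nbhE (inr j)).
- by have := nbhE (inr j0); rewrite /= Hj0.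
- by have := nbhE (inr j0); rewrite /= Hj0.
- by rewrite (cols_inj j1 j2) // => i; apply: (nbhE (inl i)).
Qed.

End ReducedGraph.

Section ReducedAdjacency.

Variables (T : finType) (e : rel T) (A : {set T}) (k : nat) (g : 'I_k + 'I_k -> T).
Hypotheses (e_sym : symmetric e) (eA : bipartition e A) (g_bij : bijective g).
Hypotheses (g_inl : forall i, g (inl i) \in A) (g_inr : forall j, g (inr j) \notin A).

Definition reduced_adj : 'M[bool]_k := \matrix_(i, j) e (g (inl i)) (g (inr j)).

Lemma reduced_adjE u v : e (g u) (g v) = bip_rel reduced_adj u v.
Proof.
case: u v => [i|j] [i'|j'] /=; rewrite ?mxE 1?e_sym //; apply/negP => /eA.
  by rewrite !g_inl.
by rewrite !(negbTE (g_inr _)).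
Qed.

Lemma twin_free_reduced_adj : twin_free e -> twin_free (bip_rel reduced_adj).
Proof.
move=> tf u v /setP nbhE; apply: (bij_inj g_bij); apply: tf; apply/setP => z.
have [f gK fK] := g_bij.
by rewrite !inE -(fK z) !reduced_adjE; have := nbhE (f z); rewrite !inE.
Qed.

Lemma g_onto x : exists u, g u = x.
Proof. by have [f _ fK] := g_bij; exists (f x). Qed.

Hypotheses (hk : 0 < k) (no_isolated : forall x, exists y, e x y).

Lemma reduced_adj_full_row : nbh_family e A = point_nbhs e A ->
  exists i, forall j, reduced_adj i j.
Proof.
move=> famA; have nA0 : A != set0 by apply/set0Pn; exists (g (inl (Ordinal hk))).
have [a aA nbh_a] := point_nbh_side e_sym eA no_isolated famA nA0.
have [[i|j] ga] := g_onto a; last by rewrite -ga (negbTE (g_inr j)) in aA.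
exists i => j; rewrite mxE ga.
by have /setP/(_ (g (inr j))) := nbh_a; rewrite !inE g_inr.
Qed.

Lemma reduced_adj_full_col : nbh_family e (~: A) = point_nbhs e (~: A) ->
  exists j, forall i, reduced_adj i j.
Proof.
move=> famB; have nB0 : ~: A != set0.
  by apply/set0Pn; exists (g (inr (Ordinal hk))); rewrite inE g_inr.
have [b bB nbh_b] := point_nbh_side e_sym (bipartitionC eA) no_isolated famB nB0.
have [[i|j] gb] := g_onto b; first by rewrite -gb inE g_inl in bB.
exists j => i; rewrite mxE e_sym gb.
by have /setP/(_ (g (inl i))) := nbh_b; rewrite setCK !inE g_inl.
Qed.

Lemma reduced_adj_row_union : nbh_family e A = point_nbhs e A ->
  forall i1 i2, exists i3, forall j,
    reduced_adj i3 j = reduced_adj i1 j || reduced_adj i2 j.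
Proof.
move=> famA i1 i2; set X := [set g (inl i1); g (inl i2)].
have sXA : X \subset A by apply/subsetP => x /set2P [] ->; apply: g_inl.
have nX0 : X != set0 by apply/set0Pn; exists (g (inl i1)); apply: set21.
have [a aA nbhX] := nbh_point no_isolated famA sXA nX0.
have [[i3|j] ga] := g_onto a; last by rewrite -ga (negbTE (g_inr j)) in aA.
exists i3 => j; rewrite !mxE ga.
by have /setP/(_ (g (inr j))) := nbhX; rewrite nbhU !nbh1 !inE.
Qed.

End ReducedAdjacency.

Lemma good_matrix_graph k (M : 'M[bool]_k) : good_matrix M ->
  [/\ connected_graph (bip_rel M), twin_free (bip_rel M) & imax (bip_rel M) = k.+1].
Proof.
case=> full_row full_col cols_inj rows_inj row_union.
have tf := twin_free_bip_rel full_col rows_inj cols_inj.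
split=> //; first exact: connected_bip_rel.
rewrite (imax_bipartition (bip_rel_sym M) (@bipartition_bip_rel k M)).
rewrite (nbh_family_point (row_union_closed row_union)).
by rewrite card_point_nbhs ?card_row_vertices //; apply: bip_rel_no_isolated.
Qed.

Lemma graph_good_matrix k (T : finType) (e : rel T) : 0 < k ->
  simple_graph e -> #|T| = (2 * k)%N -> bipartite e ->
  connected_graph e -> twin_free e -> imax e = k.+1 ->
  exists2 M : 'M[bool]_k, good_matrix M &
    exists f : T -> 'I_k + 'I_k, bijective f /\ forall x y, e x y = bip_rel M (f x) (f y).
Proof.
move=> hk [e_sym _] cardT [c c_bip] conn tf imaxE.
pose A := [set x | c x].
have eA : bipartition e A by move=> x y /c_bip; rewrite !inE.
have no_iso : forall x, exists y, e x y by apply: connected_no_isolated; rewrite // cardT; lia.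
have cardA := card_bipartition_imax e_sym eA tf no_iso cardT imaxE.
have cardB := card_bipartition_imax e_sym (bipartitionC eA) tf no_iso cardT imaxE.
have famA : nbh_family e A = point_nbhs e A.
  by apply: nbh_family_point_of_imax => //; rewrite imaxE cardA.
have famB : nbh_family e (~: A) = point_nbhs e (~: A).
  by apply: nbh_family_point_of_imax => //; [apply: bipartitionC | rewrite imaxE cardB].
have [g [g_bij g_inl g_inr]] := exists_bipartition_bij cardA cardB.
have tfM := twin_free_reduced_adj e_sym eA g_bij g_inl g_inr tf.
exists (reduced_adj e g); first split.
- by apply: (reduced_adj_full_row (A := A)); assumption.
- by apply: (reduced_adj_full_col (A := A)); assumption.
- exact: bip_rel_cols_inj.
- exact: bip_rel_rows_inj.
- by apply: (reduced_adj_row_union (A := A)); assumption.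
have [f gK fK] := g_bij; exists f; split; first by exists g.
by move=> x y; rewrite -(reduced_adjE e_sym eA g_inl g_inr) !fK.
Qed.

Theorem proposition3p3 (k : nat) (hk : 0 < k) :
  (* every good matrix yields a connected twin-free bipartite graph
     of order 2k with i_max = k+1 *)
  (forall M : 'M[bool]_k, good_matrix M ->
     connected_graph (bip_rel M) /\ twin_free (bip_rel M) /\
     imax (bip_rel M) = k.+1)
  /\
  (* every connected twin-free bipartite graph of order 2k with i_max = k+1
     arises (up to isomorphism) from such a matrix *)
  (forall (T : finType) (e : rel T),
     simple_graph e -> #|T| = (2 * k)%N -> bipartite e ->
     connected_graph e -> twin_free e -> imax e = k.+1 ->
     exists M : 'M[bool]_k, good_matrix M /\
       exists f : T -> 'I_k + 'I_k,
         bijective f /\ forall x y, e x y = bip_rel M (f x) (f y)).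
Proof.
split=> [M /good_matrix_graph [] // | T e e_simple cardT e_bip conn tf imaxE].
by have [M goodM iso] := graph_good_matrix hk e_simple cardT e_bip conn tf imaxE; exists M.
Qed.
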